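(* Let $\ell\geq 1$ be an integer. For $\kappa\in\{1,\ldots,\ell+1\}$ let $A^{[\kappa]}\in M_\ell(\mathbb{R})$ be the matrix obtained from the $\ell\times(\ell+1)$ matrix with entries $\big((i-1)(\ell+1)+j\big)^{\ell-1}$ ($1\leq i\leq \ell$, $1\leq j\leq \ell+1$) by deleting its $\kappa$-th column; equivalently $(A^{[\kappa]})_{ij}=\big((i-1)(\ell+1)+r^{[\kappa]}_j\big)^{\ell-1}$ with $r^{[\kappa]}_j=j$ for $1\leq j\leq\kappa-1$ and $r^{[\kappa]}_j=j+1$ for $\kappa\leq j\leq \ell$. Then there exists a number $\sigma_\ell$ depending only on $\ell$ such that for all $\kappa\in\{1,\ldots,\ell+1\}$ \[ \det(A^{[\kappa]})=(-1)^\ell\sigma_\ell\binom{\ell}{\kappa-1}. \] *)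

From mathcomp Require Import all_boot all_order all_algebra.
From mathcomp Require Import reals.
Set Implicit Arguments. Unset Strict Implicit. Unset Printing Implicit Defensive.
Import Order.TTheory GRing.Theory Num.Theory.
Local Open Scope ring_scope.

(* 0-indexed column selector: for k = kappa-1, column j (0-indexed) of A^[kappa]
   is column r j of the full l x (l+1) matrix, r j = j if j < k, j+1 otherwise. *)
Definition rcol (k j : nat) : nat := if (j < k)%N then j else j.+1.

(* A^[kappa] with k = kappa - 1 in {0..l}; entries ((i-1)(l+1)+r_j)^(l-1)
   in 1-indexed form, i.e. (i*(l+1) + rcol k j + 1)^(l-1) 0-indexed. *)
Definition Akappa (R : realType) (l k : nat) : 'M[R]_l :=
  \matrix_(i < l, j < l) (((i * l.+1 + rcol k j).+1)%:R ^+ l.-1).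

(* The column vector v with v_c = (-1)^c C(l, c) lies in the kernel of the full
   l x (l+1) matrix, because the l-th finite difference of a polynomial of degree
   l - 1 vanishes. For any M with M v = 0, linearity of the determinant in one
   column gives v_k det M^[k+1] + v_(k+1) det M^[k] = 0 for adjacent deleted
   columns k, k+1 (here 0-based). With our v this reads
   C(l, k) det A^[k+1] = C(l, k+1) det A^[k], hence det A^[k] = C(l, k) det A^[0]. *)

From mathcomp Require Import all_boot all_order all_algebra.
From mathcomp Require Import reals ring.
Set Implicit Arguments. Unset Strict Implicit. Unset Printing Implicit Defensive.
Import Order.TTheory GRing.Theory Num.Theory.
Local Open Scope ring_scope.

Lemma sum_signed_binomial_powD (R : comPzRingType) n m (x : R) : (m < n)%N ->
  \sum_(c < n.+1) (-1) ^+ c * 'C(n, c)%:R * (x + c%:R) ^+ m = 0.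
Proof.
elim: n m x => [//|n IHn] m; elim: m => [|m IHm] x lt_mn.
  transitivity ((1 - 1 : R) ^+ n.+1); last by rewrite subrr expr0n.
  by rewrite exprBn; apply: eq_bigr => c _; rewrite !expr1n !mulr1 mulr_natr.
(* The x-part vanishes by induction on m; in the c-part, c C(n+1, c) = (n+1) C(n, c-1)
   turns the sum into the n-th difference at x + 1. *)
have splitD c : (-1) ^+ c * 'C(n.+1, c)%:R * (x + c%:R) ^+ m.+1 =
    (-1) ^+ c * 'C(n.+1, c)%:R * (x + c%:R) ^+ m * x
    + (-1) ^+ c * ('C(n.+1, c) * c)%:R * (x + c%:R) ^+ m.
  by rewrite exprSr natrM; ring.
under eq_bigr do rewrite splitD.
rewrite big_split /= -mulr_suml IHm ?mul0r ?add0r; last exact: ltnW.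
rewrite big_ord_recl muln0 mulr0 mul0r add0r.
transitivity (- n.+1%:R *
  \sum_(i < n.+1) (-1) ^+ i * 'C(n, i)%:R * (x + 1 + i%:R) ^+ m); last first.
  by rewrite IHn ?mulr0.
rewrite mulr_sumr; apply: eq_bigr => i _.
rewrite /= /bump /= add1n mulnC -mul_bin_diag succnK natrM exprS [i.+1%:R]mulrS.
by rewrite addrA mulN1r !mulNr; congr (- _); ring.
Qed.

Definition set_col (R : Type) m n (A : 'M[R]_(m, n)) (p : 'I_n) (w : 'cV[R]_m) :=
  \matrix_(r, s) if s == p then w r 0 else A r s.

Lemma det_set_col (R : comPzRingType) n (A : 'M[R]_n) p (w : 'cV_n) :
  \det (set_col A p w) = \sum_r w r 0 * cofactor A r p.
Proof.
rewrite (expand_det_col _ p); apply: eq_bigr => r _; rewrite mxE eqxx.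
congr (_ * (_ * \det _)); apply/matrixP => a b.
by rewrite !mxE eq_sym (negbTE (neq_lift _ _)).
Qed.

Lemma det_set_col_mulmx (R : comPzRingType) m n (A : 'M[R]_n) p
    (M : 'M[R]_(n, m)) (v : 'cV_m) :
  \sum_c v c 0 * \det (set_col A p (col c M)) = \det (set_col A p (M *m v)).
Proof.
rewrite det_set_col; under eq_bigr do rewrite det_set_col mulr_sumr.
rewrite exchange_big; apply: eq_bigr => r _; rewrite mxE mulr_suml.
by apply: eq_bigr => c _; rewrite mxE mulrA [v c 0 * _]mulrC.
Qed.

Lemma det_col'_adjacent (R : comPzRingType) n (M : 'M[R]_(n, n.+1))
    (v : 'cV_n.+1) (i j : 'I_n.+1) :
  M *m v = 0 -> j = i.+1 :> nat ->
  v i 0 * \det (col' j M) + v j 0 * \det (col' i M) = 0.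
Proof.
(* Replace column i of col' j M by each column c of M: weighted by v the
   determinants sum to 0, and only c = i, j avoid a repeated column. *)
move=> Mv0 ji.
have lt_in : (i < n)%N by rewrite -ltnS -ji.
pose p := Ordinal lt_in.
have lift_jp : lift j p = i by apply: val_inj; rewrite /= /bump ji ltnn.
have set_col_i : set_col (col' j M) p (col i M) = col' j M.
  by apply/matrixP => r s; rewrite !mxE; case: eqP => // ->; rewrite lift_jp.
have set_col_j : set_col (col' j M) p (col j M) = col' i M.
  apply/matrixP => r s; rewrite !mxE; case: eqP => [-> | /eqP s_p].
    by congr (M r _); apply: val_inj; rewrite /= /bump leqnn ji.
  congr (M r _); apply: val_inj; rewrite /= /bump ji.
  have s_i : nat_of_ord s != i := s_p.
  by move: s_i; case: ltngtP.
have set_col_other c : c != i -> c != j ->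
    \det (set_col (col' j M) p (col c M)) = 0.
  case: (unliftP j c) => [q -> lift_q_i _ | ->]; last by move=> _; rewrite eqxx.
  rewrite -det_tr; apply: (@determinant_alternate _ _ _ p q) => [|r].
    by apply: contraNneq lift_q_i => pq; rewrite -pq lift_jp.
  by rewrite !mxE eqxx (negbTE (contraNneq _ lift_q_i)) // => ->; rewrite lift_jp.
have sum0 : \sum_c v c 0 * \det (set_col (col' j M) p (col c M)) = 0.
  by rewrite det_set_col_mulmx Mv0 det_set_col big1 // => r _; rewrite mxE mul0r.
have ij : i != j by apply/eqP => ij; move: ji; rewrite -ij => /n_Sn.
move: sum0; rewrite (bigD1 i) // (bigD1 j) 1?eq_sym //= big1 => [|c /andP [ci cj]].
  by rewrite addr0 set_col_i set_col_j.
by rewrite set_col_other ?mulr0.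
Qed.

Definition Afull (R : pzSemiRingType) l : 'M[R]_(l, l.+1) :=
  \matrix_(i, j) ((i * l.+1 + j).+1)%:R ^+ l.-1.

Definition signed_binomials (R : pzRingType) l : 'cV[R]_l.+1 :=
  \col_c ((-1) ^+ c * 'C(l, c)%:R).

Lemma Akappa_col' (R : realType) l (k : 'I_l.+1) :
  Akappa R l k = col' k (Afull R l).
Proof. by apply/matrixP => i j; rewrite !mxE /rcol /= /bump; case: leqP. Qed.

Lemma Afull_mul_signed_binomials (R : comPzRingType) l :
  Afull R l *m signed_binomials R l = 0.
Proof.
apply/matrixP => r s; rewrite !mxE.
have lt_l'l : (l.-1 < l)%N by rewrite ltn_predL (leq_ltn_trans (leq0n r)).
rewrite -[RHS](sum_signed_binomial_powD ((r * l.+1).+1)%:R lt_l'l).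
by apply: eq_bigr => c _; rewrite !mxE -natrD addSn mulrC.
Qed.

Lemma det_col'_AfullS (R : comPzRingType) l k : (k < l)%N ->
  'C(l, k)%:R * \det (col' (inord k.+1) (Afull R l)) =
  'C(l, k.+1)%:R * \det (col' (inord k) (Afull R l)) :> R.
Proof.
move=> lt_kl.
have succ_inord : @inord l k.+1 = (@inord l k).+1 :> nat by rewrite !inordK // ltnW.
have := det_col'_adjacent (Afull_mul_signed_binomials R l) succ_inord.
rewrite !mxE succ_inord (inordK (ltnW lt_kl)) exprS mulN1r !mulNr => /eqP.
by rewrite subr_eq0 -!mulrA => /eqP /lreg_sign.
Qed.

Lemma det_col'_Afull (R : numDomainType) l k : (k <= l)%N ->
  \det (col' (inord k) (Afull R l)) = 'C(l, k)%:R * \det (col' ord0 (Afull R l)).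
Proof.
elim: k => [_ | k IHk lt_kl].
  by rewrite bin0 mul1r (_ : inord 0 = ord0) //; apply: val_inj; exact: inordK.
have Cl_neq0 : 'C(l, k)%:R != 0 :> R by rewrite pnatr_eq0 -lt0n bin_gt0 ltnW.
apply: (mulfI Cl_neq0).
by rewrite det_col'_AfullS // (IHk (ltnW lt_kl)) mulrCA.
Qed.

Theorem proposition3 (R : realType) (l : nat) (hl : (1 <= l)%N) :
  exists sigma : R, forall k : 'I_l.+1,
    \det (Akappa R l k) = (-1) ^+ l * sigma * ('C(l, k))%:R.
Proof.
exists ((-1) ^+ l * \det (col' ord0 (Afull R l))) => k.
rewrite Akappa_col' -{1}(inord_val k) det_col'_Afull; last by rewrite -ltnS.
by rewrite signrMK mulrC.
Qed.
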